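(* Let $q\in(0,1)$, $\beta<1$ real, $n\in\mathbb{N}_0$, $z\in\mathbb{C}\setminus\{0\}$, and let $\tau\neq0$ satisfy $q(\tau+\tau^{-1})=\beta(z+z^{-1})$. Then \[ p_n^{(q,\beta)}(z+z^{-1};q)=\frac{(q;q)_n}{(\beta;q)_n}\sum_{k=0}^{n}\frac{(q\tau z^{-1};q)_k(q\tau^{-1}z;q)_{n-k}}{(q;q)_k(q;q)_{n-k}}z^{2k-n}, \] and (whenever the terms below are defined) \[ p_n^{(q,\beta)}(z+z^{-1};q)=\frac{(q\tau^{-1}z;q)_n}{z^n(\beta;q)_n}\,{}_2\phi_1\!\left(q^{-n},q\tau z^{-1};q^{-n}\tau z^{-1};q,\tau z\right)=\frac{(q^2;q)_n}{q^n\tau^n(\beta;q)_n}\,{}_3\phi_2\!\left(q^{-n},q\tau z^{-1},q\tau z;q^2,0;q,q\right). \]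
   Context: $(a;q)_n:=\prod_{j=0}^{n-1}(1-aq^j)$. The monic polynomials $p_n^{(\alpha,\beta)}(x;q)$ satisfy $p_{-1}=0$, $p_0=1$, $p_{n+1}(x)=xp_n(x)-\tilde\gamma_{n-1}\tilde\gamma_np_{n-1}(x)$ with $\tilde\gamma_n=(1-\alpha q^n)/(1-\beta q^n)$; here $\alpha=q$. ${}_2\phi_1(a,b;c;q,w)=\sum_{k\ge0}\frac{(a,b;q)_k}{(c,q;q)_k}w^k$ and ${}_3\phi_2(a_1,a_2,a_3;b_1,b_2;q,w)=\sum_{k\ge0}\frac{(a_1,a_2,a_3;q)_k}{(b_1,b_2,q;q)_k}w^k$ (both terminating here because of the parameter $q^{-n}$). *)

From mathcomp Require Import all_boot all_order all_algebra.
From mathcomp Require Import complex.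
From mathcomp Require Import reals.
Set Implicit Arguments. Unset Strict Implicit. Unset Printing Implicit Defensive.
Import Order.TTheory GRing.Theory Num.Theory.
Local Open Scope ring_scope.

Definition qpoch {F : ringType} (a q : F) (n : nat) : F :=
  \prod_(j < n) (1 - a * q ^+ j).

Definition gammat {F : fieldType} (alpha beta q : F) (m : int) : F :=
  (1 - alpha * q ^ m) / (1 - beta * q ^ m).

(* pair (p_{n-1}, p_n) of the monic polynomials defined by
   p_{-1} = 0, p_0 = 1, p_{n+1} = X p_n - gamma~_{n-1} gamma~_n p_{n-1} *)
Fixpoint pq_pair {F : fieldType} (alpha beta q : F) (n : nat)
  : {poly F} * {poly F} :=
  match n with
  | 0 => (0, 1)
  | n'.+1 =>
      let pr := pq_pair alpha beta q n' in
      (pr.2, 'X * pr.2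
               - (gammat alpha beta q (n'%:Z - 1) * gammat alpha beta q n'%:Z)%:P
                 * pr.1)
  end.

Definition pq {F : fieldType} (alpha beta q : F) (n : nat) : {poly F} :=
  (pq_pair alpha beta q n).2.

Definition phi21 {F : fieldType} (N : nat) (a b c q w : F) : F :=
  \sum_(0 <= k < N.+1)
     (qpoch a q k * qpoch b q k) / (qpoch c q k * qpoch q q k) * w ^+ k.

Definition phi32 {F : fieldType} (N : nat) (a1 a2 a3 b1 b2 q w : F) : F :=
  \sum_(0 <= k < N.+1)
     (qpoch a1 q k * qpoch a2 q k * qpoch a3 q k)
       / (qpoch b1 q k * qpoch b2 q k * qpoch q q k) * w ^+ k.

(** The recurrence of the p_n, normalised by (q;q)_n/(beta;q)_n, becomes the symmetric
    three-term recurrence (1 - q^(n+2)) (Y_(n+2) + Y_n) = x (1 - beta q^(n+1)) Y_(n+1) with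
    x = z + 1/z, so it suffices to check it for each right-hand side.
    The first sum is the coefficient of w^n in the product of the q-binomial series
    (a z w; q)_oo/(z w; q)_oo and (b w/z; q)_oo/(w/z; q)_oo with a = q tau/z, b = q z/tau,
    and the q-difference equations of these series give the recurrence because
    a b = q^2 and a z + b/z = q (tau + 1/tau) = beta x.  Reading the factors of
    (q z/tau; q)_n backwards turns that sum into the 2phi1.  The 3phi2 satisfies a
    three-term recurrence of its own, obtained from a contiguous relation of its summand
    and an identity between the Pochhammer symbols (q^-n; q)_k for consecutive n. *)

From mathcomp Require Import all_boot all_order all_algebra.
From mathcomp Require Import complex reals.
From mathcomp Require Import ring lra zify.

Set Implicit Arguments. Unset Strict Implicit. Unset Printing Implicit Defensive.
Import Order.TTheory GRing.Theory Num.Theory.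
Local Open Scope ring_scope.

Section QPochhammer.
Variable F : fieldType.
Implicit Types (a b q : F) (k m n : nat).

Lemma qpoch0 a q : qpoch a q 0 = 1.
Proof. by rewrite /qpoch big_ord0. Qed.

Lemma qpochS a q n : qpoch a q n.+1 = qpoch a q n * (1 - a * q ^+ n).
Proof. by rewrite /qpoch big_ord_recr. Qed.

Lemma qpochSl a q n : qpoch a q n.+1 = (1 - a) * qpoch (a * q) q n.
Proof.
rewrite /qpoch big_ord_recl expr0 mulr1; congr (_ * _).
by apply: eq_bigr => i _; rewrite /bump /= exprS mulrA.
Qed.

Lemma qpoch0a q n : qpoch 0 q n = 1.
Proof. by rewrite /qpoch big1 // => i _; rewrite mul0r subr0. Qed.

Lemma qpochD a q m n :
  qpoch a q (m + n) = qpoch a q m * \prod_(j < n) (1 - a * q ^+ (m + j)).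
Proof. by rewrite /qpoch big_split_ord. Qed.

Lemma qpoch_neq0 a q n : (forall j, (j < n)%N -> 1 - a * q ^+ j != 0) -> qpoch a q n != 0.
Proof. by move=> h; apply/prodf_neq0 => i _; apply: h. Qed.

Lemma qpoch_neq0_leq a q k n : (k <= n)%N -> qpoch a q n != 0 -> qpoch a q k != 0.
Proof. by move=> /subnKC <-; rewrite qpochD mulf_eq0 negb_or => /andP[]. Qed.

Lemma qpoch_qinv_eq0 q m k : q != 0 -> (m < k)%N -> qpoch (q ^- m) q k = 0.
Proof.
move=> q0 /subnKC <-; rewrite qpochD qpochS; apply/eqP.
by rewrite !mulf_eq0 mulVf ?subrr ?eqxx ?orbT // expf_neq0.
Qed.

(* Read backwards, the last [k] factors of [(b;q)_n] are those of [(a;q)_k], each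
   multiplied by [-b q^(n-1-j)], because [a b q^(n-1) = 1]. *)
Lemma qpoch_rev a b q n k : (k <= n)%N -> ((0 < n)%N -> a * b * q ^+ n.-1 = 1) ->
  qpoch b q n = qpoch b q (n - k) * qpoch a q k * b ^+ k * \prod_(j < k) (- q ^+ (n.-1 - j)).
Proof.
move=> + hab; elim: k => [|k IH] hk; first by rewrite subn0 qpoch0 expr0 big_ord0 !mulr1.
have hk' : (k <= n)%N by apply: ltnW.
rewrite IH // -(subnSK hk) qpochS [qpoch a q k.+1]qpochS exprS big_ord_recr /=.
have -> : 1 - b * q ^+ (n - k.+1) = (1 - a * q ^+ k) * b * - q ^+ (n.-1 - k).
  have -> : (n - k.+1 = n.-1 - k)%N by lia.
  have hk2 : (k <= n.-1)%N by lia.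
  rewrite -[in LHS](hab _); last by lia.
  by rewrite -[in LHS](subnK hk2) addnK exprD; ring.
ring.
Qed.

End QPochhammer.

Section Recurrence.
Variables (F : fieldType) (q b : F).
Hypothesis q_nonroot : forall k, 1 - q ^+ k.+1 != 0.
Hypothesis bq_neq1 : forall k, 1 - b * q ^+ k != 0.

Lemma qpoch_qq_neq0 n : qpoch q q n != 0.
Proof. by apply: qpoch_neq0 => j _; rewrite -exprS. Qed.

Lemma qpoch_bq_neq0 n : qpoch b q n != 0.
Proof. exact: qpoch_neq0. Qed.

Lemma pqSS n :
  pq q b q n.+2 = 'X * pq q b q n.+1
                  - (gammat q b q n%:Z * gammat q b q n.+1%:Z)%:P * pq q b q n.
Proof. by rewrite /pq /= -addn1 PoszD addrK. Qed.

Lemma gammatE n : gammat q b q n%:Z = (1 - q ^+ n.+1) / (1 - b * q ^+ n).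
Proof. by rewrite /gammat -exprnP exprS. Qed.

Lemma horner_pq_normalized (x : F) (Y : nat -> F) :
  Y 0 = 1 -> (1 - q) / (1 - b) * Y 1 = x ->
  (forall n, (1 - q ^+ n.+2) * (Y n.+2 + Y n) = x * (1 - b * q ^+ n.+1) * Y n.+1) ->
  forall n, (pq q b q n).[x] = qpoch q q n / qpoch b q n * Y n.
Proof.
move=> Y0 Y1 Yrec.
pose c n := qpoch q q n / qpoch b q n.
have cS n : c n.+1 = c n * gammat q b q n%:Z.
  by rewrite /c gammatE !qpochS -exprS; field; rewrite qpoch_bq_neq0 bq_neq1.
suff IH n : (pq q b q n).[x] = c n * Y n /\ (pq q b q n.+1).[x] = c n.+1 * Y n.+1.
  by move=> n; case: (IH n).
elim: n => [|n [IH0 IH1]].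
  rewrite /pq /= !hornerE cS /c !qpoch0 divr1 !mul1r Y0 subr0 (gammatE 0) expr0 expr1.
  by rewrite mulr1 Y1.
split=> //; rewrite pqSS !cS !gammatE.
move: (pq q b q n.+1) (pq q b q n) IH1 IH0 => p1 p0 IH1 IH0.
rewrite hornerD hornerN !hornerM hornerX hornerC IH0 IH1 cS gammatE.
have hq := q_nonroot n.+1; have hb := bq_neq1 n.+1.
have -> : Y n.+2 = x * (1 - b * q ^+ n.+1) * Y n.+1 / (1 - q ^+ n.+2) - Y n.
  by rewrite -Yrec; field.
by rewrite /c; field; rewrite hb hq bq_neq1 qpoch_bq_neq0.
Qed.

End Recurrence.

Section Convolution.
Variable R : comPzRingType.
Implicit Types (s t : nat -> R) (q u v a b : R).

Definition conv s t n := \sum_(k < n.+1) s k * t (n - k)%N.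

Definition shift s k := if k is k'.+1 then s k' else 0.

Lemma conv_shiftl s t n : conv (shift s) t n.+1 = conv s t n.
Proof. by rewrite /conv big_ord_recl /= mul0r add0r. Qed.

Lemma conv_shiftr s t n : conv s (shift t) n.+1 = conv s t n.
Proof.
rewrite /conv big_ord_recr /= subnn mulr0 addr0.
by apply: eq_bigr => i _; rewrite subSn // -ltnS.
Qed.

Lemma conv_expM q s t n :
  conv (fun k => q ^+ k * s k) (fun k => q ^+ k * t k) n = q ^+ n * conv s t n.
Proof.
rewrite /conv mulr_sumr; apply: eq_bigr => i _.
by rewrite -[in q ^+ n](subnKC (ltnSE (ltn_ord i))) exprD; ring.
Qed.

Lemma conv_sub_shift u v s t n :
  conv (fun k => s k - u * shift s k) (fun k => t k - v * shift t k) n.+2 =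
  conv s t n.+2 - (u + v) * conv s t n.+1 + u * v * conv s t n.
Proof.
have -> : conv (fun k => s k - u * shift s k) (fun k => t k - v * shift t k) n.+2 =
    conv s t n.+2 - u * conv (shift s) t n.+2 - v * conv s (shift t) n.+2
    + u * v * conv (shift s) (shift t) n.+2.
  rewrite /conv !mulr_sumr -!sumrB -big_split; apply: eq_bigr => i _ /=; ring.
by rewrite !conv_shiftl !conv_shiftr; ring.
Qed.

(* Coefficientwise form of the q-difference equations
   [(1 - u w) s(w) = (1 - a u w) s(q w)] and [(1 - v w) t(w) = (1 - b v w) t(q w)]
   of the generating functions, multiplied together. *)
Lemma conv_qdiff q u v a b s t n :
  (forall k, (1 - q ^+ k.+1) * s k.+1 = u * (1 - a * q ^+ k) * s k) ->
  (forall k, (1 - q ^+ k.+1) * t k.+1 = v * (1 - b * q ^+ k) * t k) ->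
  conv s t n.+2 - (u + v) * conv s t n.+1 + u * v * conv s t n =
  q ^+ n.+2 * conv s t n.+2 - (a * u + b * v) * (q ^+ n.+1 * conv s t n.+1)
  + a * u * (b * v) * (q ^+ n * conv s t n).
Proof.
have sub_shift w c r (hr : forall k, (1 - q ^+ k.+1) * r k.+1 = w * (1 - c * q ^+ k) * r k) k :
    r k - w * shift r k = q ^+ k * r k - c * w * shift (fun k => q ^+ k * r k) k.
  case: k => [|k] /=; first by rewrite expr0 mul1r !mulr0.
  apply/eqP; rewrite -subr_eq0; apply/eqP.
  transitivity ((1 - q ^+ k.+1) * r k.+1 - w * (1 - c * q ^+ k) * r k); first by ring.
  by rewrite hr subrr.
move=> hs ht; rewrite -conv_sub_shift -!conv_expM -conv_sub_shift.
by apply: eq_bigr => i _; rewrite (sub_shift _ _ _ hs) (sub_shift _ _ _ ht).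
Qed.

End Convolution.

Section QBinomialProduct.
Variables (F : fieldType) (q : F).
Hypothesis q_nonroot : forall k, 1 - q ^+ k.+1 != 0.

Definition qbin_coef (a w : F) k := qpoch a q k / qpoch q q k * w ^+ k.

Lemma qbin_coefS a w k :
  (1 - q ^+ k.+1) * qbin_coef a w k.+1 = w * (1 - a * q ^+ k) * qbin_coef a w k.
Proof.
have := q_nonroot k; rewrite /qbin_coef !qpochS -exprS [w ^+ _]exprS => hk.
by field; rewrite hk qpoch_qq_neq0.
Qed.

Variables (a b z be : F).
Hypotheses (z_neq0 : z != 0) (ab_q2 : a * b = q ^+ 2) (azb : a * z + b / z = be * (z + z^-1)).

Let S := conv (qbin_coef a z) (qbin_coef b z^-1).

Lemma conv_qbin_coef0 : S 0 = 1.
Proof. by rewrite /S /conv big_ord1 /qbin_coef !qpoch0 !expr0 !divr1 !mulr1. Qed.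

Lemma conv_qbin_coef1 : 1 - be != 0 -> (1 - q) / (1 - be) * S 1 = z + z^-1.
Proof.
move=> hbe; have := q_nonroot 0; rewrite expr1 => hq.
rewrite /S /conv big_ord_recr big_ord1 /qbin_coef /= !qpochS !qpoch0 !expr0 !expr1.
have -> : z + z^-1 = (z + z^-1 - be * (z + z^-1)) / (1 - be) by field; rewrite hbe.
by rewrite -azb; field; rewrite hbe hq z_neq0 oner_eq0.
Qed.

Lemma conv_qbin_coef_rec n :
  (1 - q ^+ n.+2) * (S n.+2 + S n) = (z + z^-1) * (1 - be * q ^+ n.+1) * S n.+1.
Proof.
have := conv_qdiff n (qbin_coefS a z) (qbin_coefS b z^-1).
rewrite -/S [a * z * _]mulrACA ab_q2 divff // mulr1 mul1r azb => E.
apply/eqP; rewrite -subr_eq0 -(subrr (S n.+2 - (z + z^-1) * S n.+1 + S n)) {2}E.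
by apply/eqP; rewrite !exprS; ring.
Qed.

End QBinomialProduct.

Section TerminatingPhi32.
Variables (F : fieldType) (q : F).
Hypotheses (q_neq0 : q != 0) (q_nonroot : forall k, 1 - q ^+ k.+1 != 0).

Lemma qpoch_q2_neq0 n : qpoch (q ^+ 2) q n != 0.
Proof. by apply: qpoch_neq0 => j _; rewrite -exprD addnC addn2. Qed.

Lemma qpoch_q2E n : qpoch (q ^+ 2) q n = qpoch q q n * (1 - q ^+ n.+1) / (1 - q).
Proof.
have := q_nonroot 0; rewrite expr1 => hq.
by apply: (mulIf hq); rewrite divfK // mulrC expr2 -qpochSl qpochS -exprS.
Qed.

Lemma qinv_neq1 m : 1 - q ^- m.+1 != 0.
Proof.
rewrite -[1 - _](@mulfK _ (q ^+ m.+1)) ?expf_neq0 // mulrBl mul1r mulVf ?expf_neq0 //.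
by rewrite mulf_neq0 ?invr_neq0 ?expf_neq0 // -opprB oppr_eq0.
Qed.

Lemma qpoch_qinv_contiguous p n k :
  (1 - q ^+ n.+3) * qpoch (q ^- n.+2) q k.+1
  - qpoch (q ^- n.+1) q k.+1 / q ^+ k.+1 * (1 + p * (q ^+ k.+1 * q ^+ k.+1))
  + q ^+ n.+1 * (q ^+ 2 + p) * qpoch (q ^- n.+1) q k.+1
  + p * (1 - q ^+ n.+1) * qpoch (q ^- n) q k.+1
  + qpoch (q ^- n.+1) q k / q ^+ k * ((1 - q ^+ k.+1) * (1 - q ^+ k.+2) / q) = 0.
Proof.
have qinvSq m : q ^- m.+1 * q = q ^- m by rewrite exprS invfM mulrAC mulVf // mul1r.
have E2 : qpoch (q ^- n.+2) q k.+1 = (1 - q ^- n.+2) * qpoch (q ^- n.+1) q k.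
  by rewrite qpochSl qinvSq.
have E0 : qpoch (q ^- n) q k.+1 = qpoch (q ^- n.+1) q k * (1 - q ^- n.+1 * q ^+ k)
          * (1 - q ^- n.+1 * q ^+ k.+1) / (1 - q ^- n.+1).
  apply: (mulIf (qinv_neq1 n)); rewrite divfK ?qinv_neq1 //.
  by rewrite -(qinvSq n) mulrC -qpochSl !qpochS -mulrA.
rewrite E2 qpochS E0.
have hn := q_nonroot n; have hn1 := q_nonroot n.+1.
rewrite !exprS !invfM; rewrite !exprS in hn hn1.
by field; rewrite q_neq0 !expf_neq0 //= -opprB oppr_eq0 hn.
Qed.

Variables a a' : F.

Definition phi32_weight k :=
  q ^+ k * (qpoch a q k * qpoch a' q k) / (qpoch (q ^+ 2) q k * qpoch q q k).

Local Notation Phi m := (phi32 m (q ^- m) a a' (q ^+ 2) 0 q q).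

Lemma phi32_weightE m d :
  Phi m = \sum_(k < m.+1 + d) qpoch (q ^- m) q k * phi32_weight k.
Proof.
elim: d => [|d IH].
  rewrite addn0 /phi32 big_mkord; apply: eq_bigr => k _.
  by rewrite qpoch0a mulr1 /phi32_weight; field; rewrite qpoch_q2_neq0 qpoch_qq_neq0.
by rewrite addnS big_ord_recr /= -IH qpoch_qinv_eq0 ?mul0r ?addr0 // ltnS leq_addr.
Qed.

Lemma phi32_weight_contiguous k :
  (a + a') * phi32_weight k =
  ((1 + a * a' * (q ^+ k * q ^+ k)) * phi32_weight k
   - (1 - q ^+ k.+1) * (1 - q ^+ k.+2) / q * phi32_weight k.+1) / q ^+ k.
Proof.
have h1 := q_nonroot k; have h2 := q_nonroot k.+1.
have h3 := qpoch_qq_neq0 q_nonroot k; have h4 := qpoch_q2_neq0 k.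
rewrite /phi32_weight !qpochS !exprS; rewrite !exprS in h1 h2 h4.
by rewrite mulrA in h2; field; rewrite expf_neq0 // h1 h2 h3 h4 q_neq0.
Qed.

Lemma phi32_rec n :
  (1 - q ^+ n.+3) * Phi n.+2 - (a + a') * Phi n.+1
  + q ^+ n.+1 * (q ^+ 2 + a * a') * Phi n.+1 + a * a' * (1 - q ^+ n.+1) * Phi n = 0.
Proof.
pose w := phi32_weight; pose e m k := qpoch (q ^- m) q k.
pose C k := (1 - q ^+ n.+3) * e n.+2 k - e n.+1 k / q ^+ k * (1 + a * a' * (q ^+ k * q ^+ k))
  + q ^+ n.+1 * (q ^+ 2 + a * a') * e n.+1 k + a * a' * (1 - q ^+ n.+1) * e n k.
pose g k := e n.+1 k / q ^+ k * ((1 - q ^+ k.+1) * (1 - q ^+ k.+2) / q).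
transitivity (\sum_(k < n.+3) (C k * w k + g k * w k.+1)).
  rewrite (phi32_weightE n.+2 0) (phi32_weightE n.+1 1).
  rewrite (phi32_weightE n 2) addn0 addn1 addn2.
  rewrite !mulr_sumr -!sumrB -!big_split; apply: eq_bigr => k _ /=.
  by rewrite [(a + a') * _]mulrCA phi32_weight_contiguous // /w /C /g /e; ring.
rewrite big_split /= [X in X + _]big_ord_recl [X in _ + X]big_ord_recr /=.
have -> : g n.+2 = 0 by rewrite /g /e qpoch_qinv_eq0 // !mul0r.
have -> : C 0 = 0 by rewrite /C /e !qpoch0 expr0 invr1 !mulr1 !exprS; ring.
rewrite mul0r add0r mul0r addr0 -big_split big1 //= => k _.
by rewrite -mulrDl /C /g /e qpoch_qinv_contiguous // mul0r.
Qed.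

End TerminatingPhi32.

Lemma expfz_double_sub (F : fieldType) (z : F) n k : z != 0 -> (k <= n)%N ->
  z ^ ((2 * k)%:Z - n%:Z) = z ^+ k / z ^+ (n - k).
Proof.
move=> hz hk; have -> : ((2 * k)%:Z - n%:Z = k%:Z + - (n - k)%:Z)%R by lia.
by rewrite expfzDr // -invr_expz.
Qed.

Section ExplicitPq.
Variables (F : fieldType) (q b z t : F).
Hypotheses (q_neq0 : q != 0) (q_nonroot : forall k, 1 - q ^+ k.+1 != 0).
Hypotheses (bq_neq1 : forall k, 1 - b * q ^+ k != 0) (z_neq0 : z != 0) (t_neq0 : t != 0).
Hypothesis qt_bz : q * (t + t^-1) = b * (z + z^-1).

Local Notation Phi m := (phi32 m (q ^- m) (q * t * z^-1) (q * t * z) (q ^+ 2) 0 q q).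

Definition phi32_normalized m := (1 - q ^+ m.+1) / ((1 - q) * q ^+ m * t ^+ m) * Phi m.

Lemma b_neq1 : 1 - b != 0.
Proof. by have := bq_neq1 0; rewrite expr0 mulr1. Qed.

Lemma q_neq1 : 1 - q != 0.
Proof. by have := q_nonroot 0; rewrite expr1. Qed.

Lemma phi32_normalized0 : phi32_normalized 0 = 1.
Proof.
rewrite /phi32_normalized /phi32 big_nat1 !qpoch0 !expr0 !mulr1 expr1 !divr1.
by rewrite divff ?q_neq1 // mul1r.
Qed.

Lemma phi32_normalized1 : (1 - q) / (1 - b) * phi32_normalized 1 = z + z^-1.
Proof.
have h1 := q_nonroot 1; rewrite !exprS expr0 mulr1 in h1.
rewrite /phi32_normalized /phi32 big_mkord big_ord_recr big_ord1 /= !qpochS !qpoch0 !expr0 !expr1.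
have -> : z + z^-1 = (z + z^-1 - b * (z + z^-1)) / (1 - b) by field; rewrite b_neq1.
rewrite -qt_bz; field.
by rewrite b_neq1 q_neq1 h1 q_neq0 t_neq0 z_neq0 oner_eq0.
Qed.

Lemma phi32_normalized_rec n :
  (1 - q ^+ n.+2) * (phi32_normalized n.+2 + phi32_normalized n) =
    (z + z^-1) * (1 - b * q ^+ n.+1) * phi32_normalized n.+1.
Proof.
have := phi32_rec q_neq0 q_nonroot (q * t * z^-1) (q * t * z) n.
rewrite /phi32_normalized.
set P2 := Phi n.+2; set P1 := Phi n.+1; set P0 := Phi n => H.
have h1 := q_nonroot n; have h2 := q_nonroot n.+1; have h3 := q_nonroot n.+2.
apply/eqP; rewrite -subr_eq0.
have -> : (1 - q ^+ n.+2) *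
  ((1 - q ^+ n.+3) / ((1 - q) * q ^+ n.+2 * t ^+ n.+2) * P2 +
   (1 - q ^+ n.+1) / ((1 - q) * q ^+ n * t ^+ n) * P0) -
  (z + z^-1) * (1 - b * q ^+ n.+1) *
  ((1 - q ^+ n.+2) / ((1 - q) * q ^+ n.+1 * t ^+ n.+1) * P1) =
  (1 - q ^+ n.+2) / ((1 - q) * q ^+ n.+2 * t ^+ n.+2) *
   ((1 - q ^+ n.+3) * P2 - (q * t * z^-1 + q * t * z) * P1 +
    q ^+ n.+1 * (q ^+ 2 + q * t * z^-1 * (q * t * z)) * P1 +
    q * t * z^-1 * (q * t * z) * (1 - q ^+ n.+1) * P0)
  + (1 - q ^+ n.+2) / ((1 - q) * t ^+ n.+1) * P1 * (b * (z + z^-1) - q * (t + t^-1)).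
  rewrite !exprS; rewrite !exprS in h1 h2 h3; field.
  by rewrite q_neq1 q_neq0 t_neq0 z_neq0 !expf_neq0.
by rewrite H mulr0 add0r qt_bz subrr mulr0.
Qed.

Lemma horner_pq_conv n :
  (pq q b q n).[z + z^-1] = qpoch q q n / qpoch b q n *
    conv (qbin_coef q (q * t * z^-1) z) (qbin_coef q (q * t^-1 * z) z^-1) n.
Proof.
have ab_q2 : q * t * z^-1 * (q * t^-1 * z) = q ^+ 2 by rewrite expr2; field; rewrite t_neq0 z_neq0.
have azb : q * t * z^-1 * z + q * t^-1 * z / z = b * (z + z^-1).
  by rewrite -qt_bz; field; rewrite t_neq0 z_neq0.
apply: horner_pq_normalized => //; first exact: conv_qbin_coef0.
  exact: conv_qbin_coef1 b_neq1.
by move=> m; apply: conv_qbin_coef_rec.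
Qed.

Lemma horner_pq_phi32 n :
  (pq q b q n).[z + z^-1] = qpoch (q ^+ 2) q n / (q ^+ n * t ^+ n * qpoch b q n) *
    phi32 n (q ^- n) (q * t * z^-1) (q * t * z) (q ^+ 2) 0 q q.
Proof.
rewrite (horner_pq_normalized q_nonroot bq_neq1 phi32_normalized0 phi32_normalized1
  phi32_normalized_rec).
rewrite /phi32_normalized mulrA (qpoch_q2E q_nonroot); congr (_ * _).
by field; rewrite q_neq1 qpoch_bq_neq0 // !expf_neq0.
Qed.

Lemma horner_pq_qbin_sum n :
  (pq q b q n).[z + z^-1] = qpoch q q n / qpoch b q n *
    \sum_(0 <= k < n.+1)
       qpoch (q * t * z^-1) q k * qpoch (q * t^-1 * z) q (n - k)
         / (qpoch q q k * qpoch q q (n - k)) * z ^ ((2 * k)%:Z - n%:Z).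
Proof.
rewrite horner_pq_conv; congr (_ * _); rewrite big_mkord; apply: eq_bigr => k _.
rewrite (expfz_double_sub z_neq0 (ltnSE (ltn_ord k))) /qbin_coef exprVn invfM.
by ring.
Qed.

Lemma horner_pq_phi21 n : qpoch (q ^- n * t * z^-1) q n != 0 ->
  (pq q b q n).[z + z^-1] = qpoch (q * t^-1 * z) q n / (z ^+ n * qpoch b q n) *
    phi21 n (q ^- n) (q * t * z^-1) (q ^- n * t * z^-1) q (t * z).
Proof.
move=> hc; rewrite horner_pq_conv /phi21 big_mkord /conv !mulr_sumr; apply: eq_bigr => k _.
have hk := ltnSE (ltn_ord k).
have rev_q : (0 < n)%N -> q ^- n * q * q ^+ n.-1 = 1.
  by move=> /prednK {1}<-; rewrite exprS; field; rewrite q_neq0 expf_neq0.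
have rev_b : (0 < n)%N -> q ^- n * t * z^-1 * (q * t^-1 * z) * q ^+ n.-1 = 1.
  by move=> /prednK {1}<-; rewrite exprS; field; rewrite q_neq0 t_neq0 z_neq0 expf_neq0.
rewrite (qpoch_rev hk rev_b) (qpoch_rev hk rev_q).
have hzn : z ^+ n = z ^+ (n - k) * z ^+ k by rewrite -exprD subnK.
have hD : \prod_(j < k) (- q ^+ (n.-1 - j)) != 0.
  by apply/prodf_neq0 => j _; rewrite oppr_eq0 expf_neq0.
have hck : qpoch (q ^- n * t * z^-1) q k != 0 by apply: qpoch_neq0_leq hc.
rewrite hzn /qbin_coef !exprMn !exprVn.
by field; rewrite !qpoch_qq_neq0 // hck qpoch_bq_neq0 // !expf_neq0.
Qed.

End ExplicitPq.

Lemma one_sub_expS_neq0 (R : realDomainType) (q : R) k : 0 < q -> q < 1 -> 1 - q ^+ k.+1 != 0.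
Proof. by move=> q0 q1; rewrite subr_eq0 eq_sym lt_eqF // exprn_ilt1 // ltW. Qed.

Lemma one_sub_mul_expr_neq0 (R : realDomainType) (q b : R) k :
  0 < q -> q < 1 -> b < 1 -> 1 - b * q ^+ k != 0.
Proof.
move=> q0 q1 b1; have qk0 : 0 < q ^+ k by apply: exprn_gt0.
have qk1 : q ^+ k <= 1 by apply: exprn_ile1; rewrite ltW.
by rewrite subr_eq0 eq_sym lt_eqF //; nra.
Qed.

Local Open Scope complex_scope.

Theorem proposition2p18 (R : realType) (q beta : R) (n : nat) (z tau : R[i])
  (hq0 : 0 < q) (hq1 : q < 1) (hbeta : beta < 1)
  (hz : z != 0) (htau : tau != 0)
  (hrel : q%:C * (tau + tau^-1) = beta%:C * (z + z^-1)) :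
  let Q := q%:C in
  let B := beta%:C in
  let P := (pq Q B Q n).[z + z^-1] in
  [/\ P = qpoch Q Q n / qpoch B Q n *
          \sum_(0 <= k < n.+1)
             qpoch (Q * tau * z^-1) Q k * qpoch (Q * tau^-1 * z) Q (n - k)
               / (qpoch Q Q k * qpoch Q Q (n - k)) * z ^ ((2 * k)%:Z - n%:Z),
      qpoch (Q ^- n * tau * z^-1) Q n != 0 ->
        P = qpoch (Q * tau^-1 * z) Q n / (z ^+ n * qpoch B Q n) *
            phi21 n (Q ^- n) (Q * tau * z^-1) (Q ^- n * tau * z^-1) Q (tau * z)
    & P = qpoch (Q ^+ 2) Q n / (Q ^+ n * tau ^+ n * qpoch B Q n) *
          phi32 n (Q ^- n) (Q * tau * z^-1) (Q * tau * z) (Q ^+ 2) 0 Q Q].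
Proof.
move=> Q B P.
have q_neq0 : Q != 0 by rewrite fmorph_eq0 gt_eqF.
have q_nonroot k : 1 - Q ^+ k.+1 != 0.
  by rewrite -rmorphXn -(rmorph1 (real_complex R)) -rmorphB fmorph_eq0 one_sub_expS_neq0.
have bq_neq1 k : 1 - B * Q ^+ k != 0.
  rewrite -rmorphXn -rmorphM -(rmorph1 (real_complex R)) -rmorphB fmorph_eq0.
  exact: one_sub_mul_expr_neq0.
split; first exact: horner_pq_qbin_sum.
  exact: horner_pq_phi21.
exact: horner_pq_phi32.
Qed.
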